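(* Let $\mathcal V$ be a finite vocabulary and $C\ge 2$ an integer. For each $i\in\{1,\dots,C\}$ let $w_i:\mathcal V\to\mathbb R$ be arbitrary maps such that there exist a token $\tau\in\mathcal V$ and an index $i\in\{2,\dots,C\}$ with $w_i(\tau)\neq 0$, and let $b\in\mathbb R$. Then there is no parametrization of a single-layer transformer $F$ (with $L=1$, any number $H\ge 1$ of heads, either encoder-only or decoder-only) such that for every sequence $\mathbf t=[t_1,\dots,t_{|\mathbf t|}]$ over $\mathcal V$ with $1\le|\mathbf t|\le C$, $$F(\mathbf t)=b+\sum_{i=1}^{|\mathbf t|} w_i(t_i).$$
   Context: Let $\mathcal V$ be a finite vocabulary and $C\ge 2$ the context length; inputs are sequences $\mathbf t=[t_1,\dots,t_{|\mathbf t|}]$ with $t_i\in\mathcal V$ and $1\le|\mathbf t|\le C$. An $L$-layer transformer (without positional embeddings) with embedding dimension $d$, head dimension $d_h$ and $H\ge 1$ heads per layer is specified by: an embedding map $e:\mathcal V\to\mathbb R^d$; for each layer $l\in\{1,\dots,L\}$ and head $h\in\{1,\dots,H\}$, matrices $W_Q^{(l,h)},W_K^{(l,h)},W_V^{(l,h)}\in\mathbb R^{d\times d_h}$, vectors $b_Q^{(l,h)},b_K^{(l,h)},b_V^{(l,h)}\in\mathbb R^{d_h}$ and a linear map $P_{l,h}:\mathbb R^{d_h}\to\mathbb R^d$; for each layer an arbitrary function $\mathrm{ffn}_l:\mathbb R^d\to\mathbb R^d$; and an arbitrary classification head $\mathrm{cls}:\mathbb R^d\to\mathbb R^2$. A parametrization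 is any choice of all these objects. On input $\mathbf t$, set $h_i^{(0)}=e(t_i)$. In layer $l$, for each head $h$ compute $q_i=(W_Q^{(l,h)})^\top h_i^{(l-1)}+b_Q^{(l,h)}$, $k_i=(W_K^{(l,h)})^\top h_i^{(l-1)}+b_K^{(l,h)}$, $v_i=(W_V^{(l,h)})^\top h_i^{(l-1)}+b_V^{(l,h)}$; attention weights $a_{ij}=\exp(q_i^\top k_j/\sqrt{d_h})/\sum_{j'\in J_i}\exp(q_i^\top k_{j'}/\sqrt{d_h})$ for $j\in J_i$ and $a_{ij}=0$ for $j\notin J_i$, where $J_i=\{1,\dots,|\mathbf t|\}$ for an encoder-only model and $J_i=\{1,\dots,i\}$ for a decoder-only model (causal mask); head output $s_i^{(h)}=\sum_{j} a_{ij}v_j$. Then $h_i^{(l)}=\mathrm{ffn}_l\big(h_i^{(l-1)}+\sum_{h=1}^H P_{l,h}(s_i^{(h)})\big)$. The output (log odds) is $F(\mathbf t)=\Delta(\mathrm{cls}(h_r^{(L)}))$, where $\Delta(\ell)=\ell_1-\ell_0$ for $\ell=(\ell_0,\ell_1)\in\mathbb R^2$, and $r=1$ for encoder-only models, $r=|\mathbf t|$ for decoder-only models. *)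

From HB Require Import structures.
From mathcomp Require Import all_boot all_order all_algebra.
From mathcomp Require Import all_classical all_reals.
From mathcomp Require Import topology normedtype sequences exp.
Set Implicit Arguments. Unset Strict Implicit. Unset Printing Implicit Defensive.
Import Order.TTheory GRing.Theory Num.Theory.
Local Open Scope ring_scope.

(* Row-vector convention: a hidden state is a row vector h : 'rV_d, and
   (W^T h + b) in column notation becomes (h *m W + b) in row notation. *)

Record layer_params (R : realType) (d dh H : nat) := LayerParams {
  WQ : 'I_H -> 'M[R]_(d, dh);
  WK : 'I_H -> 'M[R]_(d, dh);
  WV : 'I_H -> 'M[R]_(d, dh);
  bQ : 'I_H -> 'rV[R]_dh;
  bK : 'I_H -> 'rV[R]_dh;
  bV : 'I_H -> 'rV[R]_dh;
  Pmap : 'I_H -> 'M[R]_(dh, d);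
  ffn : 'rV[R]_d -> 'rV[R]_d
}.

(* A parametrization of an L-layer transformer (no positional embeddings). *)
Record transformer (R : realType) (V : finType) (d dh H L : nat) := Transformer {
  emb : V -> 'rV[R]_d;
  layers : 'I_L -> layer_params R d dh H;
  cls : 'rV[R]_d -> R * R
}.

Definition dotv (R : realType) (n : nat) (u v : 'rV[R]_n) : R :=
  \sum_(k < n) u 0 k * v 0 k.

(* Attended positions J_i (0-based): all positions for an encoder,
   positions j <= i for a decoder (causal mask). *)
Definition Jset (decoder : bool) (n i : nat) : seq nat :=
  [seq j <- iota 0 n | if decoder then (j <= i)%N else true].

Definition head_out (R : realType) (d dh H : nat) (decoder : bool)
    (lp : layer_params R d dh H) (h : 'I_H) (hs : seq 'rV[R]_d) (i : nat)
    : 'rV[R]_dh :=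
  let n := size hs in
  let q := nth 0 hs i *m WQ lp h + bQ lp h in
  let k j := nth 0 hs j *m WK lp h + bK lp h in
  let v j := nth 0 hs j *m WV lp h + bV lp h in
  let score j := expR (dotv q (k j) / Num.sqrt (dh%:R)) in
  let Z := \sum_(j' <- Jset decoder n i) score j' in
  \sum_(j <- Jset decoder n i) ((score j / Z) *: v j).

Definition apply_layer (R : realType) (d dh H : nat) (decoder : bool)
    (lp : layer_params R d dh H) (hs : seq 'rV[R]_d) : seq 'rV[R]_d :=
  [seq ffn lp (nth 0 hs i + \sum_(h < H) (head_out decoder lp h hs i *m Pmap lp h))
  | i <- iota 0 (size hs)].

Definition Delta (R : realType) (l : R * R) : R := l.2 - l.1.

(* F(t) = Delta(cls(h_r^{(L)})), r = 1 (encoder) or r = |t| (decoder);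
   in 0-based indexing r-1 = 0 or size t - 1. *)
Definition tf_output (R : realType) (V : finType) (d dh H L : nat)
    (decoder : bool) (p : transformer R V d dh H L) (t : seq V) : R :=
  let h0 := [seq emb p x | x <- t] in
  let hL := foldl (fun hs l => apply_layer decoder (layers p l) hs) h0 (enum 'I_L) in
  let r := if decoder then (size t).-1 else 0%N in
  Delta (cls p (nth 0 hL r)).

From HB Require Import structures.
From mathcomp Require Import all_boot all_order all_algebra.
From mathcomp Require Import all_classical all_reals.
From mathcomp Require Import topology normedtype sequences exp.
Import Order.TTheory GRing.Theory Num.Theory.
Set Implicit Arguments. Unset Strict Implicit. Unset Printing Implicit Defensive.
Local Open Scope ring_scope.

(* Without positional embeddings a constant sequence [tau; ...; tau] is seen
   identically at every position: each attention head averages equal values,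
   so a single layer maps it to a constant sequence whose entries do not depend
   on the length n.  Hence F(tau^n) is independent of n, whereas the target
   b + w_1(tau) + ... + w_n(tau) changes by w_i(tau) != 0 between n = i - 1
   and n = i. *)

Lemma weighted_avg_const (R : fieldType) m (J : seq nat) (f : nat -> R)
    (v : nat -> 'rV[R]_m) (x : 'rV[R]_m) :
  \sum_(j <- J) f j != 0 -> {in J, forall j, v j = x} ->
  \sum_(j <- J) (f j / \sum_(j' <- J) f j') *: v j = x.
Proof.
move=> S_neq0 v_const.
rewrite (eq_big_seq (fun j => (f j / \sum_(j' <- J) f j') *: x)); last first.
  by move=> j /v_const ->.
by rewrite -scaler_suml -mulr_suml divff ?scale1r.
Qed.

Lemma sum_seq_gt0 (R : numDomainType) (J : seq nat) (f : nat -> R) j0 :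
  j0 \in J -> {in J, forall j, 0 < f j} -> 0 < \sum_(j <- J) f j.
Proof.
move=> J_j0 f_gt0; rewrite (big_rem j0) //= big_seq.
apply: ltr_wpDr; last exact: f_gt0 _ J_j0.
by apply: sumr_ge0 => j /mem_rem J_j; apply/ltW/f_gt0.
Qed.

Lemma Jset_lt (decoder : bool) n i j : j \in Jset decoder n i -> (j < n)%N.
Proof. by rewrite /Jset mem_filter mem_iota add0n => /andP[_ /andP[]]. Qed.

Lemma Jset0 (decoder : bool) n i : (0 < n)%N -> 0%N \in Jset decoder n i.
Proof.
by move=> n_gt0; rewrite /Jset mem_filter mem_iota n_gt0; case: decoder.
Qed.

Lemma head_out_nseq (R : realType) d dh H (decoder : bool)
    (lp : layer_params R d dh H) h (e : 'rV[R]_d) n i :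
  (i < n)%N -> head_out decoder lp h (nseq n e) i = e *m WV lp h + bV lp h.
Proof.
move=> lt_in; rewrite /head_out size_nseq; apply: weighted_avg_const.
  apply/lt0r_neq0/(@sum_seq_gt0 _ _ _ 0%N) => [|j _]; last exact: expR_gt0.
  exact: Jset0 (leq_ltn_trans (leq0n i) lt_in).
by move=> j /Jset_lt lt_jn; rewrite nth_nseq lt_jn.
Qed.

Definition layer_out_nseq (R : realType) d dh H (lp : layer_params R d dh H)
    (e : 'rV[R]_d) : 'rV[R]_d :=
  ffn lp (e + \sum_(h < H) ((e *m WV lp h + bV lp h) *m Pmap lp h)).

Lemma apply_layer_nseq (R : realType) d dh H (decoder : bool)
    (lp : layer_params R d dh H) (e : 'rV[R]_d) n :
  apply_layer decoder lp (nseq n e) = nseq n (layer_out_nseq lp e).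
Proof.
rewrite /apply_layer size_nseq; apply: (@eq_from_nth _ 0).
  by rewrite size_map size_iota size_nseq.
move=> i; rewrite size_map size_iota => lt_in.
rewrite (nth_map 0%N) ?size_iota // nth_iota // add0n !nth_nseq lt_in.
by congr (ffn _ (_ + _)); apply: eq_bigr => h _; rewrite head_out_nseq.
Qed.

Lemma tf_output1_nseq (R : realType) (V : finType) d dh H (decoder : bool)
    (p : transformer R V d dh H 1) (tau : V) n :
  (0 < n)%N ->
  tf_output decoder p (nseq n tau)
  = Delta (cls p (layer_out_nseq (layers p ord0) (emb p tau))).
Proof.
have enum_I1 : enum 'I_1 = [:: ord0].
  by apply: (inj_map val_inj); rewrite val_enum_ord.
move=> n_gt0; rewrite /tf_output map_nseq enum_I1 /= apply_layer_nseq.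
by rewrite size_nseq nth_nseq; case: decoder; rewrite ?ltn_predL n_gt0.
Qed.

Theorem proposition4p1 (R : realType) (V : finType) (C : nat)
    (w : nat -> V -> R) (b : R) :
  (2 <= C)%N ->
  (exists (tau : V) (i : nat), (2 <= i <= C)%N /\ w i tau != 0) ->
  forall (decoder : bool) (d dh H : nat),
    (0 < d)%N -> (0 < dh)%N -> (0 < H)%N ->
  forall p : transformer R V d dh H 1,
  ~ (forall t : seq V, (1 <= size t <= C)%N ->
       tf_output decoder p t
       = b + \sum_(i < size t) w i.+1 (tnth (in_tuple t) i)).
Proof.
move=> _ [tau [i [/andP[i_ge2 i_leC] w_neq0]]] decoder d dh H _ _ _ p F_eq.
have F_nseq n : (0 < n <= C)%N ->
    Delta (cls p (layer_out_nseq (layers p ord0) (emb p tau)))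
    = b + \sum_(k < n) w k.+1 tau.
  case/andP=> n_gt0 n_leC; rewrite -(tf_output1_nseq decoder p tau n_gt0).
  rewrite F_eq ?size_nseq ?n_gt0 //; congr (_ + _).
  rewrite -[in RHS](size_nseq n tau); apply: eq_bigr => k _.
  by rewrite (tnth_nth tau) nth_nseq; case: ifP.
have i_gt0 : (0 < i)%N by apply: ltn_trans i_ge2.
have i1_gt0 : (0 < i.-1)%N by rewrite -ltnS prednK.
have i1_leC : (i.-1 <= C)%N by apply: leq_trans (leq_pred i) i_leC.
have sum_split : \sum_(k < i) w k.+1 tau = \sum_(k < i.-1) w k.+1 tau + w i tau.
  by rewrite -(prednK i_gt0) big_ord_recr.
move: (F_nseq i) (F_nseq i.-1); rewrite i_gt0 i_leC i1_gt0 i1_leC.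
move=> /(_ isT) -> /(_ isT); rewrite sum_split addrA -{2}[b + _]addr0.
by move=> /addrI /eqP; apply/negP.
Qed.
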